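(* Let $\eta=\pi/3$, $L\ge3$, $1\le i\le L-1$, and $u,x,x_j\in\mathbb{C}$ ($j\ne i,i+1$). Let $s=e_1\otimes e_2-e_2\otimes e_1\in\mathbb{C}^2\otimes\mathbb{C}^2$. Then for every vector $v\in(\mathbb{C}^2)^{\otimes(L-2)}$ (placed on the sites other than $i,i+1$), \[ T_L(u\,|\,x_1,\ldots,x_{i-1},x,x+2\eta,x_{i+2},\ldots,x_L)\,\big(v\otimes s_{i,i+1}\big) = r(x-u)\,r(x+2\eta-u)\ \big(T_{L-2}(u\,|\,x_1,\ldots,x_{i-1},x_{i+2},\ldots,x_L)\,v\big)\otimes s_{i,i+1}, \] where $s_{i,i+1}$ denotes $s$ placed on sites $i,i+1$ and $T_{L-2}$ acts on the sites other than $i,i+1$ (in their induced order).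
   Context: Theta functions with nome $p^2$, where $p=e^{i\pi\tau}$, $\operatorname{Im}\tau>0$: $\theta_1(x;q)=2\sum_{n\ge0}(-1)^nq^{(n+1/2)^2}\sin((2n+1)x)$, $\theta_4(x;q)=1+2\sum_{n\ge1}(-1)^nq^{n^2}\cos(2nx)$, $q=p^2$. Boltzmann weights: $a(x)=\theta_4(2\eta;p^2)\theta_4(x;p^2)\theta_1(x+2\eta;p^2)$, $b(x)=\theta_4(2\eta;p^2)\theta_1(x;p^2)\theta_4(x+2\eta;p^2)$, $c(x)=\theta_1(2\eta;p^2)\theta_4(x;p^2)\theta_4(x+2\eta;p^2)$, $d(x)=\theta_1(2\eta;p^2)\theta_1(x;p^2)\theta_1(x+2\eta;p^2)$, and $r(x)=\theta_4(0;p^2)\theta_1(x+\eta;p^2)\theta_4(x+\eta;p^2)$. $R(x)$ is the operator on $\mathbb{C}^2\otimes\mathbb{C}^2$ whose matrix in the basis $e_1\otimes e_1,e_1\otimes e_2,e_2\otimes e_1,e_2\otimes e_2$ is $\begin{pmatrix}a&0&0&d\\0&b&c&0\\0&c&b&0\\d&0&0&a\end{pmatrix}(x)$. On $\mathbb{C}^2_0\otimes(\mathbb{C}^2)^{\otimes L}$ (auxiliary space $0$ and sites $1,\ldots,L$), $R_{0j}(x)$ denotes $R(x)$ acting on factors $0$ and $j$. The transfer matrix is the operator on $(\mathbb{C}^2)^{\otimes L}$ \[ T_L(u\,|\,x_1,\ldots,x_L)=\operatorname{Tr}_0\big(R_{0L}(x_L-u)\,R_{0,L-1}(x_{L-1}-u)\cdots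 R_{01}(x_1-u)\big), \] (operator composition, so $R_{01}$ is applied first), $\operatorname{Tr}_0$ being the partial trace over the auxiliary space. *)

From Stdlib Require Import Reals List Bool ClassicalEpsilon.
Import ListNotations.
Open Scope R_scope.

Definition Cplx : Type := (R * R)%type.
Definition RtoC (a : R) : Cplx := (a, 0).
Definition C0 : Cplx := (0, 0).
Definition C1 : Cplx := (1, 0).
Definition Ci : Cplx := (0, 1).
Definition Cadd (z w : Cplx) : Cplx := (fst z + fst w, snd z + snd w).
Definition Copp (z : Cplx) : Cplx := (- fst z, - snd z).
Definition Csub (z w : Cplx) : Cplx := Cadd z (Copp w).
Definition Cmul (z w : Cplx) : Cplx :=
  (fst z * fst w - snd z * snd w, fst z * snd w + snd z * fst w).
Definition Cim (z : Cplx) : R := snd z.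

Definition Cexp (z : Cplx) : Cplx := (exp (fst z) * cos (snd z), exp (fst z) * sin (snd z)).
Definition Csin (z : Cplx) : Cplx :=
  Cmul (Csub (Cexp (Cmul Ci z)) (Cexp (Copp (Cmul Ci z)))) (0, - / 2).
Definition Ccos (z : Cplx) : Cplx :=
  Cmul (Cadd (Cexp (Cmul Ci z)) (Cexp (Copp (Cmul Ci z)))) (/ 2, 0).

(** sum of a complex series: the limit of partial sums (0 if divergent) *)
Fixpoint Cpartial (f : nat -> Cplx) (N : nat) : Cplx :=
  match N with
  | O => f O
  | S k => Cadd (Cpartial f k) (f (S k))
  end.
Definition Cseries_conv (f : nat -> Cplx) (l : Cplx) : Prop :=
  Un_cv (fun N => fst (Cpartial f N)) (fst l) /\
  Un_cv (fun N => snd (Cpartial f N)) (snd l).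
Definition Cseries (f : nat -> Cplx) : Cplx :=
  epsilon (inhabits C0) (fun l => Cseries_conv f l).

Definition sgn (n : nat) : Cplx := RtoC ((-1) ^ n).

(** * Theta functions with nome q = p^2, p = exp(i pi tau).
    q^{(n+1/2)^2} := exp(2 i pi tau (n+1/2)^2), q^{n^2} := exp(2 i pi tau n^2). *)
Definition theta1 (tau x : Cplx) : Cplx :=
  Cmul (RtoC 2) (Cseries (fun n =>
    Cmul (sgn n)
      (Cmul (Cexp (Cmul (Cmul (RtoC (2 * PI * (INR n + /2) ^ 2)) Ci) tau))
            (Csin (Cmul (RtoC (2 * INR n + 1)) x))))).
Definition theta4 (tau x : Cplx) : Cplx :=
  Cadd C1 (Cmul (RtoC 2) (Cseries (fun k =>
    let n := S k in
    Cmul (sgn n)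
      (Cmul (Cexp (Cmul (Cmul (RtoC (2 * PI * (INR n) ^ 2)) Ci) tau))
            (Ccos (Cmul (RtoC (2 * INR n)) x)))))).

Definition eta2 (eta : Cplx) : Cplx := Cadd eta eta.
Definition wa tau eta x := Cmul (theta4 tau (eta2 eta)) (Cmul (theta4 tau x) (theta1 tau (Cadd x (eta2 eta)))).
Definition wb tau eta x := Cmul (theta4 tau (eta2 eta)) (Cmul (theta1 tau x) (theta4 tau (Cadd x (eta2 eta)))).
Definition wc tau eta x := Cmul (theta1 tau (eta2 eta)) (Cmul (theta4 tau x) (theta4 tau (Cadd x (eta2 eta)))).
Definition wd tau eta x := Cmul (theta1 tau (eta2 eta)) (Cmul (theta1 tau x) (theta1 tau (Cadd x (eta2 eta)))).
Definition wr tau eta x := Cmul (theta4 tau C0) (Cmul (theta1 tau (Cadd x eta)) (theta4 tau (Cadd x eta))).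

(** * R-matrix entries. Basis vector e_1 is [false], e_2 is [true].
    Rent x al be ga de = matrix entry of R(x) in row e_al (x) e_be, column e_ga (x) e_de. *)
Definition Rent tau eta (x : Cplx) (al be ga de : bool) : Cplx :=
  if Bool.eqb al ga && Bool.eqb be de then
    (if Bool.eqb al be then wa tau eta x else wb tau eta x)
  else if negb (Bool.eqb al ga) && negb (Bool.eqb be de) then
    (if Bool.eqb al be then wd tau eta x else wc tau eta x)
  else C0.

(** * Vectors in (Cplx^2)^{(x) L}: functions on spin configurations (lists of length L) *)
Fixpoint configs (n : nat) : list (list bool) :=
  match n with
  | O => [[]]
  | S k => flat_map (fun c => [false :: c; true :: c]) (configs k)
  end.
Definition Csum (l : list Cplx) : Cplx := fold_right Cadd C0 l.

(** Monodromy R_{0L}(x_L-u) ... R_{01}(x_1-u) (R_{01} applied first):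
    entry with auxiliary output a', auxiliary input a, site output sg, site input ta. *)
Fixpoint mono tau eta (u : Cplx) (xs : list Cplx) (a' a : bool) (sg ta : list bool) : Cplx :=
  match xs, sg, ta with
  | [], [], [] => if Bool.eqb a' a then C1 else C0
  | y :: ys, s :: sg', t :: ta' =>
      Cadd (Cmul (mono tau eta u ys a' false sg' ta') (Rent tau eta (Csub y u) false s a t))
           (Cmul (mono tau eta u ys a' true sg' ta') (Rent tau eta (Csub y u) true s a t))
  | _, _, _ => C0
  end.

Definition Tent tau eta u xs sg ta : Cplx :=
  Cadd (mono tau eta u xs false false sg ta) (mono tau eta u xs true true sg ta).

Definition Tapply tau eta (L : nat) (u : Cplx) (xs : list Cplx) (v : list bool -> Cplx)
  : list bool -> Cplx :=
  fun sg => Csum (map (fun ta => Cmul (Tent tau eta u xs sg ta) (v ta)) (configs L)).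

Definition singlet (p q : bool) : Cplx :=
  match p, q with
  | false, true => C1
  | true, false => Copp C1
  | _, _ => C0
  end.

(** v (x) s_{i,i+1}: s placed on sites i,i+1 (1-based), v on the other sites *)
Definition ins_singlet (i : nat) (v : list bool -> Cplx) : list bool -> Cplx :=
  fun sg => Cmul (v (firstn (i - 1) sg ++ skipn (i + 1) sg))
                 (singlet (nth (i - 1) sg false) (nth i sg false)).

(** spectral parameters x_1..x_{i-1}, x, x+2eta, x_{i+2}..x_L from the list of the others *)
Definition insert_pair (i : nat) (x y : Cplx) (xs : list Cplx) : list Cplx :=
  firstn (i - 1) xs ++ [x; y] ++ skipn (i - 1) xs.

Definition eta_pi3 : Cplx := RtoC (PI / 3).

(** The whole statement reduces to a local fact about two sites:
    the two R-matrices [R(x+2eta-u) R(x-u)] applied to the singlet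
    [e1 (x) e2 - e2 (x) e1] give [r(x-u) r(x+2eta-u)] times the singlet, tensored
    with the identity of the auxiliary space.  Entrywise this is a pair of
    quadratic relations between the weights, [a(y) b(y') - c(y) c(y') = r(y) r(y')]
    and [a(y') b(y) - d(y) d(y') = r(y) r(y')] with [y' = y + 2 eta]; since
    [3 eta = pi], they are the addition formulas for [theta1] and [theta4]. *)

From Pilot Require Import Defs.
From Stdlib Require Import Reals Lra Lia List ZArith ClassicalEpsilon.
From Coquelicot Require Import Rcomplements Rbar Lim_seq Series Hierarchy.
Import ListNotations.
Open Scope R_scope.

Definition qr : R := exp (-1).

Lemma qr_pos : 0 < qr.
Proof. apply exp_pos. Qed.

Lemma qr_lt_1 : qr < 1.
Proof. unfold qr. rewrite <- exp_0. apply exp_increasing. lra. Qed.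

Lemma qr_abs : Rabs qr < 1.
Proof. rewrite Rabs_pos_eq; [apply qr_lt_1 | left; apply qr_pos]. Qed.

Lemma qr_pow_pos n : 0 < qr ^ n.
Proof. apply pow_lt, qr_pos. Qed.

Lemma qr_pow_le n m : (n <= m)%nat -> qr ^ m <= qr ^ n.
Proof.
  intros H. replace m with (n + (m - n))%nat by lia. rewrite pow_add.
  pose proof (qr_pow_pos n).
  assert (qr ^ (m - n) <= 1).
  { rewrite <- (pow1 (m - n)). apply pow_incr.
    pose proof qr_pos; pose proof qr_lt_1; lra. }
  nra.
Qed.

Definition geom_dom (a : nat -> R) (K : R) : Prop := forall n, Rabs (a n) <= K * qr ^ n.

Lemma geom_dom_K_nonneg a K : geom_dom a K -> 0 <= K.
Proof.
  intros H. specialize (H 0%nat). simpl in H. pose proof (Rabs_pos (a 0%nat)). lra.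
Qed.

Lemma ex_series_geomK K : ex_series (fun n => K * qr ^ n).
Proof.
  apply (ex_series_scal_l (V := R_NormedModule) K (fun n => qr ^ n)).
  apply ex_series_geom, qr_abs.
Qed.

Lemma geom_dom_ex a K : geom_dom a K -> ex_series a.
Proof.
  intros H. apply (ex_series_le (V := R_CompleteNormedModule) a (fun n => K * qr ^ n)).
  - intros n. apply H.
  - apply ex_series_geomK.
Qed.

Lemma geom_dom_bound a K : geom_dom a K -> Rabs (Series a) <= K / (1 - qr).
Proof.
  intros H.
  assert (Habs : ex_series (fun n => Rabs (a n))).
  { apply geom_dom_ex with K. intros n. rewrite Rabs_Rabsolu. apply H. }
  eapply Rle_trans. { apply Series_Rabs, Habs. }
  eapply Rle_trans.
  { apply Series_le with (b := fun n => K * qr ^ n).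
    - intros n; split; [apply Rabs_pos | apply H].
    - apply ex_series_geomK. }
  rewrite Series_scal_l, Series_geom by apply qr_abs. unfold Rdiv. lra.
Qed.

Lemma series_partial_sums a : ex_series a -> is_lim_seq (sum_f_R0 a) (Series a).
Proof.
  intros H. apply Series_correct, is_series_Reals in H. apply is_lim_seq_Reals, H.
Qed.

Lemma Series_even_odd a K : geom_dom a K ->
  Series a = Series (fun n => a (2 * n)%nat) + Series (fun n => a (S (2 * n))).
Proof.
  intros H. pose proof (geom_dom_K_nonneg _ _ H) as K0.
  assert (HE : geom_dom (fun n => a (2 * n)%nat) K).
  { intros n. eapply Rle_trans; [apply H|]. apply Rmult_le_compat_l; auto.
    apply qr_pow_le; lia. }
  assert (HO : geom_dom (fun n => a (S (2 * n))) K).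
  { intros n. eapply Rle_trans; [apply H|]. apply Rmult_le_compat_l; auto.
    apply qr_pow_le; lia. }
  assert (Hpartial : forall N, sum_f_R0 (fun n => a (2 * n)%nat) N
                               + sum_f_R0 (fun n => a (S (2 * n))) N = sum_f_R0 a (S (2 * N))).
  { induction N as [|N IHN]; [simpl; ring|].
    rewrite (tech5 (fun n => a (2 * n)%nat) N), (tech5 (fun n => a (S (2 * n))) N).
    replace (S (2 * S N)) with (S (S (S (2 * N)))) by lia.
    rewrite (tech5 a (S (S (2 * N)))), (tech5 a (S (2 * N))), <- IHN.
    replace (2 * S N)%nat with (S (S (2 * N))) by lia. ring. }
  assert (Lsplit := is_lim_seq_plus' _ _ _ _
            (series_partial_sums _ (geom_dom_ex _ _ HE))
            (series_partial_sums _ (geom_dom_ex _ _ HO))).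
  apply (is_lim_seq_ext _ _ _ Hpartial), is_lim_seq_unique in Lsplit.
  assert (Lall : is_lim_seq (fun N => sum_f_R0 a (S (2 * N))) (Series a)).
  { apply (is_lim_seq_subseq (sum_f_R0 a) _ (fun N => S (2 * N))).
    - apply eventually_subseq. intros; lia.
    - apply series_partial_sums, (geom_dom_ex _ _ H). }
  apply is_lim_seq_unique in Lall. rewrite Lsplit in Lall. now injection Lall.
Qed.

Definition dom2 (F : nat -> nat -> R) (K : R) : Prop :=
  forall m n, Rabs (F m n) <= K * qr ^ m * qr ^ n.

Lemma Series_sum_rows F K : dom2 F K ->
  forall N, ex_series (fun n => sum_f_R0 (fun m => F m n) N) /\
    Series (fun n => sum_f_R0 (fun m => F m n) N) = sum_f_R0 (fun m => Series (F m)) N.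
Proof.
  intros H.
  assert (HF : forall m, geom_dom (F m) (K * qr ^ m)) by (intros m n; apply H).
  induction N as [|N [IH1 IH2]].
  - split; [apply (geom_dom_ex _ _ (HF 0%nat)) | reflexivity].
  - simpl. split.
    + apply (ex_series_plus (V := R_NormedModule)); auto. apply (geom_dom_ex _ _ (HF (S N))).
    + rewrite Series_plus, IH2; auto. apply (geom_dom_ex _ _ (HF (S N))).
Qed.

Lemma Series_rows_tail F K : dom2 F K -> forall N,
  Rabs (Series (fun n => Series (fun m => F m n)) - sum_f_R0 (fun m => Series (F m)) N)
  <= K / (1 - qr) / (1 - qr) * qr * qr ^ N.
Proof.
  intros H N. pose proof qr_pos; pose proof qr_lt_1.
  assert (HF' : forall n, geom_dom (fun m => F m n) (K * qr ^ n)).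
  { intros n m. replace (K * qr ^ n * qr ^ m) with (K * qr ^ m * qr ^ n) by ring. apply H. }
  destruct (Series_sum_rows F K H N) as [E1 E2]. rewrite <- E2, <- Series_minus; auto.
  2:{ apply geom_dom_ex with (K / (1 - qr)). intros n.
      eapply Rle_trans; [apply (geom_dom_bound _ _ (HF' n))|]. apply Req_le; unfold Rdiv; ring. }
  assert (Htail : forall n, Series (fun m => F m n) - sum_f_R0 (fun m => F m n) N
                            = Series (fun k => F (S N + k)%nat n)).
  { intros n. rewrite (Series_incr_n (fun m => F m n) (S N)); [simpl; ring | lia |].
    apply (geom_dom_ex _ _ (HF' n)). }
  rewrite (Series_ext _ _ Htail).
  assert (Hg : geom_dom (fun n => Series (fun k => F (S N + k)%nat n)) (K * qr ^ S N / (1 - qr))).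
  { intros n. eapply Rle_trans.
    - apply geom_dom_bound with (K := K * qr ^ S N * qr ^ n).
      intros k. eapply Rle_trans; [apply H|]. rewrite pow_add. apply Req_le. ring.
    - apply Req_le; unfold Rdiv; ring. }
  eapply Rle_trans; [apply (geom_dom_bound _ _ Hg)|]. simpl. apply Req_le. field. lra.
Qed.

Lemma Series_fubini F K : dom2 F K ->
  Series (fun m => Series (F m)) = Series (fun n => Series (fun m => F m n)).
Proof.
  intros H. set (S2 := Series (fun n => Series (fun m => F m n))).
  set (c := K / (1 - qr) / (1 - qr) * qr).
  assert (Hrows : geom_dom (fun m => Series (F m)) (K / (1 - qr))).
  { intros m. eapply Rle_trans; [apply (geom_dom_bound (F m) (K * qr ^ m))|].
    - intros n. apply H.
    - apply Req_le; unfold Rdiv; ring. }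
  assert (Hc : is_lim_seq (fun N => c * qr ^ N) 0).
  { replace (Finite 0) with (Rbar_mult c 0) by (simpl; f_equal; ring).
    apply is_lim_seq_scal_l, is_lim_seq_geom, qr_abs. }
  assert (L2 : is_lim_seq (sum_f_R0 (fun m => Series (F m))) S2).
  { apply is_lim_seq_le_le with (u := fun N => S2 - c * qr ^ N) (w := fun N => S2 + c * qr ^ N).
    - intros N. pose proof (Series_rows_tail F K H N) as B.
      apply Rabs_le_between' in B. fold S2 c in B. lra.
    - replace (Finite S2) with (Finite (S2 - 0)) by (f_equal; ring).
      apply is_lim_seq_minus'; [apply is_lim_seq_const | exact Hc].
    - replace (Finite S2) with (Finite (S2 + 0)) by (f_equal; ring).
      apply is_lim_seq_plus'; [apply is_lim_seq_const | exact Hc]. }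
  apply is_lim_seq_unique in L2.
  pose proof (is_lim_seq_unique _ _ (series_partial_sums _ (geom_dom_ex _ _ Hrows))) as L1.
  rewrite L1 in L2. now injection L2.
Qed.

Lemma Cplx_eq (a b c d : R) : a = c -> b = d -> (a, b) = (c, d).
Proof. intros; subst; reflexivity. Qed.

Ltac cunfold := unfold Cadd, Cmul, Csub, Copp, C0, Defs.C1, Defs.RtoC, Ci, eta2, eta_pi3 in *.
Ltac cring := cunfold; simpl; apply Cplx_eq; simpl; ring.
Ltac cfield := cunfold; simpl; apply Cplx_eq; simpl; field.

Lemma Cplx_ring : ring_theory C0 Defs.C1 Cadd Cmul Csub Copp (@eq Cplx).
Proof.
  constructor; intros; repeat match goal with z : Cplx |- _ => destruct z end; cring.
Qed.
Add Ring CplxRing : Cplx_ring.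

Lemma Cmul_comm z w : Cmul z w = Cmul w z.
Proof. ring. Qed.

Lemma Cadd_0_r z : Cadd z C0 = z.
Proof. ring. Qed.

Lemma Csub_diag z : Csub z z = C0.
Proof. ring. Qed.

Lemma Cmul_1_r z : Cmul z Defs.C1 = z.
Proof. ring. Qed.

(** The [l^1] norm [|Re z| + |Im z|], a convenient submultiplicative norm. *)
Definition Cnorm (z : Cplx) : R := Rabs (fst z) + Rabs (snd z).

Lemma Cnorm_nonneg z : 0 <= Cnorm z.
Proof. unfold Cnorm. pose proof (Rabs_pos (fst z)); pose proof (Rabs_pos (snd z)); lra. Qed.

Lemma Cnorm_mul z w : Cnorm (Cmul z w) <= Cnorm z * Cnorm w.
Proof.
  destruct z as [a b], w as [c d]. unfold Cnorm, Cmul; simpl.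
  eapply Rle_trans; [apply Rplus_le_compat; apply Rabs_triang|].
  unfold Rminus. rewrite !Rabs_Ropp, !Rabs_mult. apply Req_le. ring.
Qed.

Lemma Cnorm_add z w : Cnorm (Cadd z w) <= Cnorm z + Cnorm w.
Proof.
  destruct z as [a b], w as [c d]. unfold Cnorm, Cadd; simpl.
  pose proof (Rabs_triang a c); pose proof (Rabs_triang b d). lra.
Qed.

Definition Cser (h : nat -> Cplx) : Cplx :=
  (Series (fun n => fst (h n)), Series (fun n => snd (h n))).

Definition Cdom (h : nat -> Cplx) (K : R) : Prop := forall n, Cnorm (h n) <= K * qr ^ n.

Lemma Cdom_fst h K : Cdom h K -> geom_dom (fun n => fst (h n)) K.
Proof.
  intros H n. eapply Rle_trans; [|apply H]. unfold Cnorm. pose proof (Rabs_pos (snd (h n))). lra.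
Qed.

Lemma Cdom_snd h K : Cdom h K -> geom_dom (fun n => snd (h n)) K.
Proof.
  intros H n. eapply Rle_trans; [|apply H]. unfold Cnorm. pose proof (Rabs_pos (fst (h n))). lra.
Qed.

Lemma Cdom_ext f g K : (forall n, f n = g n) -> Cdom f K -> Cdom g K.
Proof. intros E H n. rewrite <- E. apply H. Qed.

Lemma Cdom_add f g K1 K2 : Cdom f K1 -> Cdom g K2 -> Cdom (fun n => Cadd (f n) (g n)) (K1 + K2).
Proof.
  intros H1 H2 n. eapply Rle_trans; [apply Cnorm_add|]. specialize (H1 n); specialize (H2 n). lra.
Qed.

Lemma Cdom_scal c f K : Cdom f K -> Cdom (fun n => Cmul c (f n)) (Cnorm c * K).
Proof.
  intros H n. eapply Rle_trans; [apply Cnorm_mul|]. rewrite Rmult_assoc.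
  apply Rmult_le_compat_l; [apply Cnorm_nonneg | apply H].
Qed.

Lemma Cser_ext f g : (forall n, f n = g n) -> Cser f = Cser g.
Proof. intros H. unfold Cser. f_equal; apply Series_ext; intros n; rewrite H; auto. Qed.

Lemma Cser_add f g K1 K2 : Cdom f K1 -> Cdom g K2 ->
  Cser (fun n => Cadd (f n) (g n)) = Cadd (Cser f) (Cser g).
Proof.
  intros H1 H2. unfold Cser, Cadd; simpl.
  f_equal; apply Series_plus; eauto using geom_dom_ex, Cdom_fst, Cdom_snd.
Qed.

Lemma Cser_scal c f K : Cdom f K -> Cser (fun n => Cmul c (f n)) = Cmul c (Cser f).
Proof.
  intros H. destruct c as [c1 c2]. unfold Cser, Cmul; simpl.
  pose proof (geom_dom_ex _ _ (Cdom_fst _ _ H)) as E1.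
  pose proof (geom_dom_ex _ _ (Cdom_snd _ _ H)) as E2.
  f_equal; [rewrite Series_minus | rewrite Series_plus];
    try (rewrite !Series_scal_l; reflexivity);
    apply (ex_series_scal_l (V := R_NormedModule)); assumption.
Qed.

Lemma Cser_shift1 f K : Cdom f K -> Cser f = Cadd (f 0%nat) (Cser (fun n => f (S n))).
Proof.
  intros H. unfold Cser, Cadd; simpl.
  f_equal; apply Series_incr_1; eauto using geom_dom_ex, Cdom_fst, Cdom_snd.
Qed.

Lemma Cser_bound f K : Cdom f K -> Cnorm (Cser f) <= 2 * K / (1 - qr).
Proof.
  intros H. unfold Cnorm, Cser; simpl.
  pose proof (geom_dom_bound _ _ (Cdom_fst _ _ H)). pose proof (geom_dom_bound _ _ (Cdom_snd _ _ H)).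
  unfold Rdiv in *. lra.
Qed.

Lemma Cser_even_odd f K : Cdom f K ->
  Cser f = Cadd (Cser (fun n => f (2 * n)%nat)) (Cser (fun n => f (S (2 * n)))).
Proof.
  intros H. unfold Cser, Cadd; simpl.
  f_equal; eapply Series_even_odd; [apply Cdom_fst | apply Cdom_snd]; eauto.
Qed.

Lemma Cser_fubini (F : nat -> nat -> Cplx) K :
  (forall m n, Cnorm (F m n) <= K * qr ^ m * qr ^ n) ->
  Cser (fun m => Cser (F m)) = Cser (fun n => Cser (fun m => F m n)).
Proof.
  intros H. unfold Cser; simpl.
  f_equal; [apply (Series_fubini (fun m n => fst (F m n)) K)
           | apply (Series_fubini (fun m n => snd (F m n)) K)];
    intros m n; eapply Rle_trans; try apply H; unfold Cnorm;
    [pose proof (Rabs_pos (snd (F m n))) | pose proof (Rabs_pos (fst (F m n)))]; lra.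
Qed.

Lemma Cseries_Cser f K : Cdom f K -> Cseries f = Cser f.
Proof.
  intros H.
  assert (Hpartial : forall (p : Cplx -> R), (p = fst \/ p = snd) ->
            forall N, p (Cpartial f N) = sum_f_R0 (fun n => p (f n)) N).
  { intros p Hp N. induction N as [|N IH]; [reflexivity|].
    simpl. rewrite <- IH. destruct Hp; subst; reflexivity. }
  assert (HC : Cseries_conv f (Cser f)).
  { split; apply is_lim_seq_Reals; eapply is_lim_seq_ext;
      try (intros n; symmetry; apply Hpartial; auto);
      apply series_partial_sums; eapply geom_dom_ex;
      [apply Cdom_fst | apply Cdom_snd]; eauto. }
  assert (HE : Cseries_conv f (Cseries f)).
  { unfold Cseries. apply epsilon_spec. exists (Cser f). exact HC. }
  destruct HC as [H1 H2], HE as [H3 H4]. destruct (Cseries f) as [p q]. unfold Cser.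
  f_equal; eapply UL_sequence; eauto.
Qed.

(** * Bilateral series over [Z] *)

Definition zweight (k : Z) : R := exp (- IZR (Z.abs k)).
Definition zpos (n : nat) : Z := Z.of_nat n.
Definition zneg (n : nat) : Z := (- Z.of_nat (S n))%Z.

Definition Zsum (g : Z -> Cplx) : Cplx :=
  Cadd (Cser (fun n => g (zpos n))) (Cser (fun n => g (zneg n))).

Definition Zdom (g : Z -> Cplx) (K : R) : Prop := forall k, Cnorm (g k) <= K * zweight k.

Lemma exp_le_mono x y : x <= y -> exp x <= exp y.
Proof. intros [H|H]; [left; apply exp_increasing; auto | subst; lra]. Qed.

Lemma zweight_pos k : 0 < zweight k.
Proof. apply exp_pos. Qed.

Lemma zweight_le_1 k : zweight k <= 1.
Proof.
  unfold zweight. rewrite <- exp_0. apply exp_le_mono.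
  pose proof (IZR_le 0 _ (Z.abs_nonneg k)). lra.
Qed.

Lemma zweight_le k l : (Z.abs l <= Z.abs k)%Z -> zweight k <= zweight l.
Proof. intros H. apply IZR_le in H. apply exp_le_mono. lra. Qed.

Lemma zweight_mul_le a b c : (Z.abs c <= Z.abs a + Z.abs b)%Z -> zweight a * zweight b <= zweight c.
Proof.
  intros H. unfold zweight. rewrite <- exp_plus. apply exp_le_mono.
  apply IZR_le in H. rewrite plus_IZR in H. lra.
Qed.

Lemma zweight_shift k d : zweight (k + d) <= exp (IZR (Z.abs d)) * zweight k.
Proof.
  unfold zweight. rewrite <- exp_plus. apply exp_le_mono.
  assert (H : (Z.abs k <= Z.abs (k + d) + Z.abs d)%Z) by lia.
  apply IZR_le in H. rewrite plus_IZR in H. lra.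
Qed.

Lemma pow_qr_exp n : qr ^ n = exp (- INR n).
Proof.
  induction n as [|n IH]; [simpl; rewrite Ropp_0, exp_0; reflexivity|].
  rewrite S_INR, <- tech_pow_Rmult, IH. unfold qr. rewrite <- exp_plus. f_equal. ring.
Qed.

Lemma zweight_pos_part n : zweight (zpos n) = qr ^ n.
Proof.
  unfold zweight, zpos. rewrite Z.abs_eq, <- INR_IZR_INZ, pow_qr_exp by lia. reflexivity.
Qed.

Lemma zweight_neg_part n : zweight (zneg n) <= qr ^ n.
Proof.
  unfold zweight, zneg. rewrite Z.abs_neq, Z.opp_involutive, <- INR_IZR_INZ by lia.
  rewrite pow_qr_exp. apply exp_le_mono. rewrite S_INR. lra.
Qed.

Lemma Zdom_K_nonneg g K : Zdom g K -> 0 <= K.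
Proof.
  intros H. specialize (H 0%Z). pose proof (Cnorm_nonneg (g 0%Z)). pose proof (zweight_pos 0).
  destruct (Rle_dec 0 K); auto. nra.
Qed.

Lemma Zdom_pos_part g K : Zdom g K -> Cdom (fun n => g (zpos n)) K.
Proof. intros H n. rewrite <- zweight_pos_part. apply H. Qed.

Lemma Zdom_neg_part g K : Zdom g K -> Cdom (fun n => g (zneg n)) K.
Proof.
  intros H n. eapply Rle_trans; [apply H|].
  apply Rmult_le_compat_l; [eapply Zdom_K_nonneg; eauto | apply zweight_neg_part].
Qed.

Lemma Zdom_scal c f K : Zdom f K -> Zdom (fun k => Cmul c (f k)) (Cnorm c * K).
Proof.
  intros H k. eapply Rle_trans; [apply Cnorm_mul|]. rewrite Rmult_assoc.
  apply Rmult_le_compat_l; [apply Cnorm_nonneg | apply H].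
Qed.

Lemma Zdom_shift g K d : Zdom g K -> Zdom (fun k => g (k + d)%Z) (K * exp (IZR (Z.abs d))).
Proof.
  intros H k. eapply Rle_trans; [apply H|]. rewrite Rmult_assoc.
  apply Rmult_le_compat_l; [eapply Zdom_K_nonneg; eauto | apply zweight_shift].
Qed.

Lemma Zsum_ext f g : (forall k, f k = g k) -> Zsum f = Zsum g.
Proof. intros H. unfold Zsum. f_equal; apply Cser_ext; auto. Qed.

Lemma Zsum_add f g K1 K2 : Zdom f K1 -> Zdom g K2 ->
  Zsum (fun k => Cadd (f k) (g k)) = Cadd (Zsum f) (Zsum g).
Proof.
  intros H1 H2. unfold Zsum.
  rewrite (Cser_add (fun n => f (zpos n)) (fun n => g (zpos n)) K1 K2),
          (Cser_add (fun n => f (zneg n)) (fun n => g (zneg n)) K1 K2)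
    by (apply Zdom_pos_part || apply Zdom_neg_part; auto).
  ring.
Qed.

Lemma Zsum_scal c f K : Zdom f K -> Zsum (fun k => Cmul c (f k)) = Cmul c (Zsum f).
Proof.
  intros H. unfold Zsum.
  rewrite (Cser_scal c (fun n => f (zpos n)) K), (Cser_scal c (fun n => f (zneg n)) K)
    by (apply Zdom_pos_part || apply Zdom_neg_part; auto).
  ring.
Qed.

Lemma Zsum_bound f K : Zdom f K -> Cnorm (Zsum f) <= 4 * K / (1 - qr).
Proof.
  intros H. unfold Zsum. eapply Rle_trans; [apply Cnorm_add|].
  pose proof (Cser_bound _ _ (Zdom_pos_part _ _ H)).
  pose proof (Cser_bound _ _ (Zdom_neg_part _ _ H)).
  unfold Rdiv in *. lra.
Qed.

Lemma Zsum_shift1 g K : Zdom g K -> Zsum (fun k => g (k + 1)%Z) = Zsum g.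
Proof.
  intros H. unfold Zsum.
  rewrite (Cser_shift1 (fun n => g (zpos n)) K) by (apply Zdom_pos_part; auto).
  assert (Hnonpos : Cdom (fun n => g (- Z.of_nat n)%Z) K).
  { intros n. rewrite <- zweight_pos_part. eapply Rle_trans; [apply H|].
    apply Rmult_le_compat_l; [eapply Zdom_K_nonneg; eauto|].
    apply zweight_le. unfold zpos. lia. }
  rewrite (Cser_ext (fun n => g (zpos n + 1)%Z) (fun n => g (zpos (S n))))
    by (intros n; unfold zpos; f_equal; lia).
  rewrite (Cser_ext (fun n => g (zneg n + 1)%Z) (fun n => g (- Z.of_nat n)%Z))
    by (intros n; unfold zneg; f_equal; lia).
  rewrite (Cser_shift1 _ K Hnonpos).
  change (- Z.of_nat 0)%Z with 0%Z. change (zpos 0) with 0%Z.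
  change (Cser (fun n => g (- Z.of_nat (S n))%Z)) with (Cser (fun n => g (zneg n))). ring.
Qed.

Lemma Zsum_shift_nat g K (d : nat) : Zdom g K -> Zsum (fun k => g (k + Z.of_nat d)%Z) = Zsum g.
Proof.
  revert g K. induction d as [|d IH]; intros g K H.
  - apply Zsum_ext. intros k. f_equal. lia.
  - rewrite <- (IH g K H), <- (Zsum_shift1 _ _ (Zdom_shift g K (Z.of_nat d) H)).
    apply Zsum_ext. intros k. f_equal. lia.
Qed.

Lemma Zsum_shift g K d : Zdom g K -> Zsum (fun k => g (k + d)%Z) = Zsum g.
Proof.
  intros H. destruct (Z_le_gt_dec 0 d) as [Hd|Hd].
  - rewrite <- (Z2Nat.id d Hd). apply (Zsum_shift_nat g K); auto.
  - rewrite <- (Zsum_shift_nat _ _ (Z.to_nat (- d)) (Zdom_shift g K d H)).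
    apply Zsum_ext. intros k. f_equal. rewrite Z2Nat.id by lia. lia.
Qed.

Lemma Zsum_even_odd g K : Zdom g K ->
  Zsum g = Cadd (Zsum (fun k => g (2 * k)%Z)) (Zsum (fun k => g (2 * k + 1)%Z)).
Proof.
  intros H. unfold Zsum.
  rewrite (Cser_even_odd (fun n => g (zpos n)) K), (Cser_even_odd (fun n => g (zneg n)) K)
    by (apply Zdom_pos_part || apply Zdom_neg_part; auto).
  rewrite (Cser_ext (fun n => g (zpos (2 * n))) (fun n => g (2 * zpos n)%Z)),
          (Cser_ext (fun n => g (zpos (S (2 * n)))) (fun n => g (2 * zpos n + 1)%Z)),
          (Cser_ext (fun n => g (zneg (2 * n))) (fun n => g (2 * zneg n + 1)%Z)),
          (Cser_ext (fun n => g (zneg (S (2 * n)))) (fun n => g (2 * zneg n)%Z))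
    by (intros n; unfold zpos, zneg; f_equal; lia).
  ring.
Qed.

Definition Zdom2 (F : Z -> Z -> Cplx) (K : R) : Prop :=
  forall m n, Cnorm (F m n) <= K * zweight m * zweight n.

Lemma Zdom2_K_nonneg F K : Zdom2 F K -> 0 <= K.
Proof.
  intros H. apply (Zdom_K_nonneg (F 0%Z) (K * zweight 0)) in H.
  pose proof (zweight_pos 0). nra.
Qed.

Lemma Zsum_quadrants F K : Zdom2 F K ->
  Zsum (fun m => Zsum (F m)) =
  Cadd (Cadd (Cser (fun m => Cser (fun n => F (zpos m) (zpos n))))
             (Cser (fun m => Cser (fun n => F (zpos m) (zneg n)))))
       (Cadd (Cser (fun m => Cser (fun n => F (zneg m) (zpos n))))
             (Cser (fun m => Cser (fun n => F (zneg m) (zneg n))))).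
Proof.
  intros H.
  assert (HF : forall m, Zdom (F m) (K * zweight m)).
  { intros m n. apply H. }
  assert (Hrow : forall part : nat -> Z, (forall n, zweight (part n) <= qr ^ n) ->
            Zdom (fun m => Cser (fun n => F m (part n))) (2 * K / (1 - qr))).
  { intros part Hpart m. pose proof (Zdom_K_nonneg _ _ (HF m)) as K0.
    eapply Rle_trans.
    - apply (Cser_bound _ (K * zweight m)). intros n. eapply Rle_trans; [apply H|].
      apply Rmult_le_compat_l; auto.
    - apply Req_le. unfold Rdiv. ring. }
  assert (Ppos : forall n, zweight (zpos n) <= qr ^ n) by (intros; rewrite zweight_pos_part; lra).
  unfold Zsum at 2.
  rewrite (Zsum_add _ _ _ _ (Hrow zpos Ppos) (Hrow zneg zweight_neg_part)). unfold Zsum. ring.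
Qed.

Lemma Zsum_fubini F K : Zdom2 F K ->
  Zsum (fun m => Zsum (F m)) = Zsum (fun n => Zsum (fun m => F m n)).
Proof.
  intros H.
  assert (H' : Zdom2 (fun n m => F m n) K).
  { intros n m. replace (K * zweight n * zweight m) with (K * zweight m * zweight n) by ring.
    apply H. }
  rewrite (Zsum_quadrants _ _ H), (Zsum_quadrants _ _ H').
  assert (Hq : forall a b : nat -> Z, (forall n, zweight (a n) <= qr ^ n) ->
            (forall n, zweight (b n) <= qr ^ n) ->
            forall m n, Cnorm (F (a m) (b n)) <= K * qr ^ m * qr ^ n).
  { intros a b Ha Hb m n. eapply Rle_trans; [apply H|].
    pose proof (Zdom2_K_nonneg _ _ H).
    pose proof (zweight_pos (a m)); pose proof (zweight_pos (b n)).
    apply Rmult_le_compat; [nra | lra | apply Rmult_le_compat_l | ]; auto. }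
  assert (Ppos : forall n, zweight (zpos n) <= qr ^ n) by (intros; rewrite zweight_pos_part; lra).
  pose proof zweight_neg_part as Pneg.
  rewrite (Cser_fubini _ K (Hq zpos zpos Ppos Ppos)), (Cser_fubini _ K (Hq zpos zneg Ppos Pneg)),
          (Cser_fubini _ K (Hq zneg zpos Pneg Ppos)), (Cser_fubini _ K (Hq zneg zneg Pneg Pneg)).
  ring.
Qed.

(** * Gaussian sums

    [gauss_sum T a z = sum_{k in Z} exp (i pi T (k+a)^2 + 2 i (k+a) z)]
    converges for [Im T > 0]; both theta functions are sums of this form. *)

Lemma Cexp_add p q : Cexp (Cadd p q) = Cmul (Cexp p) (Cexp q).
Proof.
  destruct p as [a b], q as [c d]. unfold Cexp, Cadd, Cmul; simpl.
  rewrite exp_plus, cos_plus, sin_plus. apply Cplx_eq; ring.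
Qed.

Lemma Cexp_im y : Cexp (0, y) = (cos y, sin y).
Proof. unfold Cexp; simpl. rewrite exp_0. apply Cplx_eq; ring. Qed.

Lemma Cexp_2kpi k : Cexp (0, 2 * IZR k * PI) = Defs.C1.
Proof.
  rewrite Cexp_im. replace (2 * IZR k * PI) with (2 * (IZR k * PI)) by ring.
  rewrite cos_2a_sin, sin_2a, (sin_eq_0_1 (IZR k * PI)) by (exists k; reflexivity).
  apply Cplx_eq; ring.
Qed.

Lemma Cnorm_Cexp z : Cnorm (Cexp z) <= 2 * exp (fst z).
Proof.
  destruct z as [a b]. unfold Cnorm, Cexp; simpl. rewrite !Rabs_mult.
  rewrite (Rabs_pos_eq (exp a)) by (left; apply exp_pos).
  pose proof (exp_pos a).
  assert (Rabs (cos b) <= 1) by (apply Rabs_le, COS_bound).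
  assert (Rabs (sin b) <= 1) by (apply Rabs_le, SIN_bound). nra.
Qed.

Definition gauss_term (T : Cplx) (a : R) (z : Cplx) (k : Z) : Cplx :=
  Cexp (- (PI * (IZR k + a) ^ 2 * snd T) - 2 * (IZR k + a) * snd z,
        PI * (IZR k + a) ^ 2 * fst T + 2 * (IZR k + a) * fst z).

Definition gauss_sum (T : Cplx) (a : R) (z : Cplx) : Cplx := Zsum (gauss_term T a z).

Lemma quadratic_max c B X : 0 < c -> - c * X ^ 2 + B * X <= B ^ 2 / (4 * c).
Proof.
  intros Hc.
  assert (E : B ^ 2 / (4 * c) - (- c * X ^ 2 + B * X) = (2 * c * X - B) ^ 2 / (4 * c))
    by (field; lra).
  assert (0 <= (2 * c * X - B) ^ 2 / (4 * c)).
  { apply Rmult_le_pos; [apply pow2_ge_0 | left; apply Rinv_0_lt_compat; lra]. }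
  lra.
Qed.

Lemma gauss_term_decay T a z : 0 < snd T ->
  exists K, 0 <= K /\ forall k, Cnorm (gauss_term T a z k) <= K * zweight k * zweight k.
Proof.
  intros HT. set (c := PI * snd T). assert (Hc : 0 < c) by (unfold c; pose proof PI_RGT_0; nra).
  set (B := 2 * Rabs (snd z) + 2).
  exists (2 * exp (B ^ 2 / (4 * c) + 2 * Rabs a)). split; [pose proof (exp_pos (B ^ 2 / (4 * c) + 2 * Rabs a)); lra|].
  intros k. eapply Rle_trans; [apply Cnorm_Cexp|]. simpl fst.
  unfold zweight. rewrite !Rmult_assoc, <- !exp_plus. apply Rmult_le_compat_l; [lra|].
  apply exp_le_mono. rewrite abs_IZR.
  set (t := IZR k + a).
  assert (Hk : Rabs (IZR k) <= Rabs t + Rabs a).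
  { replace (IZR k) with (t + - a) by (unfold t; ring).
    eapply Rle_trans; [apply Rabs_triang|]. rewrite Rabs_Ropp. lra. }
  assert (Hlin : - (2 * t * snd z) <= 2 * Rabs (snd z) * Rabs t).
  { pose proof (Rabs_mult t (snd z)). pose proof (Rabs_maj2 (t * snd z)). nra. }
  assert (Hsq : t ^ 2 = Rabs t ^ 2) by (rewrite RPow_abs, Rabs_pos_eq by apply pow2_ge_0; reflexivity).
  pose proof (quadratic_max c B (Rabs t) Hc).
  replace (- (PI * (t * (t * (1 * snd T)))) - 2 * (t * snd z))
    with (- c * t ^ 2 - 2 * t * snd z) by (unfold c; ring).
  rewrite Hsq in *. unfold B in *. nra.
Qed.

Lemma gauss_term_dom T a z : 0 < snd T -> exists K, Zdom (gauss_term T a z) K.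
Proof.
  intros HT. destruct (gauss_term_decay T a z HT) as [K [K0 HK]]. exists K. intros k.
  eapply Rle_trans; [apply HK|].
  pose proof (zweight_pos k); pose proof (zweight_le_1 k).
  rewrite Rmult_assoc. apply Rmult_le_compat_l; auto. nra.
Qed.

Ltac zsimpl := repeat rewrite ?plus_IZR, ?mult_IZR, ?opp_IZR, ?minus_IZR.

(** Shifting the characteristic [a] by one only reindexes the sum. *)
Lemma gauss_sum_shift1 T a z : 0 < snd T -> gauss_sum T (a + 1) z = gauss_sum T a z.
Proof.
  intros HT. destruct (gauss_term_dom T a z HT) as [K HK]. unfold gauss_sum.
  rewrite (Zsum_ext _ (fun k => gauss_term T a z (k + 1)%Z))
    by (intros k; unfold gauss_term; zsimpl; f_equal; apply Cplx_eq; ring).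
  apply (Zsum_shift _ K 1 HK).
Qed.

Lemma gauss_sum_pi T a z : 0 < snd T ->
  gauss_sum T a (Cadd z (PI, 0)) = Cmul (Cexp (0, 2 * a * PI)) (gauss_sum T a z).
Proof.
  intros HT. destruct (gauss_term_dom T a z HT) as [K HK]. unfold gauss_sum.
  rewrite <- (Zsum_scal _ _ K HK). apply Zsum_ext. intros k.
  rewrite <- (Cmul_1_r (Cmul _ (gauss_term T a z k))), <- (Cexp_2kpi k).
  unfold gauss_term. rewrite <- !Cexp_add.
  f_equal. unfold Cadd; simpl. apply Cplx_eq; ring.
Qed.

(** Writing the product of two Gaussian sums as a double sum over [(m, m + d)]
    and splitting [d] by parity completes the square:
    [G(T,a,u) G(T,a,v) = G(2T,a,u+v) G(2T,0,v-u) + G(2T,a+1/2,u+v) G(2T,1/2,v-u)]. *)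

Lemma gauss_pair_even T a u v m l :
  Cmul (gauss_term T a u m) (gauss_term T a v (m + 2 * l)%Z) =
  Cmul (gauss_term (Cadd T T) 0 (Csub v u) l) (gauss_term (Cadd T T) a (Cadd u v) (m + l)%Z).
Proof.
  unfold gauss_term. rewrite <- !Cexp_add. f_equal.
  unfold Csub, Copp, Cadd; cbn [fst snd]. zsimpl. apply Cplx_eq; ring.
Qed.

Lemma gauss_pair_odd T a u v m l :
  Cmul (gauss_term T a u m) (gauss_term T a v (m + (2 * l + 1))%Z) =
  Cmul (gauss_term (Cadd T T) (/2) (Csub v u) l)
       (gauss_term (Cadd T T) (a + /2) (Cadd u v) (m + l)%Z).
Proof.
  unfold gauss_term. rewrite <- !Cexp_add. f_equal.
  unfold Csub, Copp, Cadd; cbn [fst snd]. zsimpl. apply Cplx_eq; field.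
Qed.

Lemma Cadd_T_T_pos T : 0 < snd T -> 0 < snd (Cadd T T).
Proof. unfold Cadd; simpl; lra. Qed.

Lemma gauss_sum_shifted_scal T a z c l : 0 < snd T ->
  Zsum (fun m => Cmul c (gauss_term T a z (m + l)%Z)) = Cmul c (gauss_sum T a z).
Proof.
  intros HT. destruct (gauss_term_dom T a z HT) as [K HK].
  rewrite (Zsum_scal c _ _ (Zdom_shift _ _ l HK)). f_equal. apply (Zsum_shift _ K l HK).
Qed.

Definition gauss_pair (T : Cplx) (a : R) (u v : Cplx) (m d : Z) : Cplx :=
  Cmul (gauss_term T a u m) (gauss_term T a v (m + d)%Z).

Lemma gauss_prod_double_sum T a u v : 0 < snd T ->
  Cmul (gauss_sum T a u) (gauss_sum T a v) = Zsum (fun m => Zsum (gauss_pair T a u v m)).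
Proof.
  intros HT.
  destruct (gauss_term_dom T a u HT) as [Ku HKu], (gauss_term_dom T a v HT) as [Kv HKv].
  unfold gauss_sum. rewrite Cmul_comm, <- (Zsum_scal _ _ _ HKu).
  apply Zsum_ext. intros m. rewrite Cmul_comm, <- (Zsum_scal _ _ _ HKv).
  rewrite <- (Zsum_shift _ _ m (Zdom_scal (gauss_term T a u m) _ _ HKv)).
  apply Zsum_ext. intros d. unfold gauss_pair. rewrite Z.add_comm. reflexivity.
Qed.

(** The double sum is absolutely convergent: [e^{-2|m|} e^{-2|m+d|} <= e^{-|m|} e^{-|d|}]. *)
Lemma gauss_pair_dom T a u v : 0 < snd T -> exists K, Zdom2 (gauss_pair T a u v) K.
Proof.
  intros HT.
  destruct (gauss_term_decay T a u HT) as [Ku [Ku0 HKu]].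
  destruct (gauss_term_decay T a v HT) as [Kv [Kv0 HKv]].
  exists (Ku * Kv). intros m d. unfold gauss_pair.
  eapply Rle_trans; [apply Cnorm_mul|].
  eapply Rle_trans; [apply Rmult_le_compat; [apply Cnorm_nonneg | apply Cnorm_nonneg | apply HKu | apply HKv]|].
  pose proof (zweight_mul_le m (m + d) d ltac:(lia)).
  pose proof (zweight_pos m); pose proof (zweight_pos (m + d)); pose proof (zweight_le_1 (m + d)).
  replace (Ku * zweight m * zweight m * (Kv * zweight (m + d) * zweight (m + d)))
    with ((Ku * Kv * zweight m) * (zweight m * zweight (m + d) * zweight (m + d))) by ring.
  apply Rmult_le_compat_l; [pose proof (Rmult_le_pos _ _ Ku0 Kv0); nra|].
  assert (zweight m * zweight (m + d) * zweight (m + d) <= zweight m * zweight (m + d)).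
  { rewrite <- (Rmult_1_r (zweight m * zweight (m + d))) at 2. apply Rmult_le_compat_l; nra. }
  lra.
Qed.

Lemma gauss_pair_sum_even T a u v l : 0 < snd T ->
  Zsum (fun m => gauss_pair T a u v m (2 * l)%Z) =
  Cmul (gauss_sum (Cadd T T) a (Cadd u v)) (gauss_term (Cadd T T) 0 (Csub v u) l).
Proof.
  intros HT. unfold gauss_pair.
  rewrite (Zsum_ext _ (fun m => Cmul (gauss_term (Cadd T T) 0 (Csub v u) l)
                                     (gauss_term (Cadd T T) a (Cadd u v) (m + l)%Z)))
    by (intros m; apply gauss_pair_even).
  rewrite gauss_sum_shifted_scal by (apply Cadd_T_T_pos; auto). ring.
Qed.

Lemma gauss_pair_sum_odd T a u v l : 0 < snd T ->
  Zsum (fun m => gauss_pair T a u v m (2 * l + 1)%Z) =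
  Cmul (gauss_sum (Cadd T T) (a + /2) (Cadd u v)) (gauss_term (Cadd T T) (/2) (Csub v u) l).
Proof.
  intros HT. unfold gauss_pair.
  rewrite (Zsum_ext _ (fun m => Cmul (gauss_term (Cadd T T) (/2) (Csub v u) l)
                                     (gauss_term (Cadd T T) (a + /2) (Cadd u v) (m + l)%Z)))
    by (intros m; apply gauss_pair_odd).
  rewrite gauss_sum_shifted_scal by (apply Cadd_T_T_pos; auto). ring.
Qed.

Lemma gauss_sum_product T a u v : 0 < snd T ->
  Cmul (gauss_sum T a u) (gauss_sum T a v) =
  Cadd (Cmul (gauss_sum (Cadd T T) a (Cadd u v)) (gauss_sum (Cadd T T) 0 (Csub v u)))
       (Cmul (gauss_sum (Cadd T T) (a + /2) (Cadd u v)) (gauss_sum (Cadd T T) (/2) (Csub v u))).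
Proof.
  intros HT. pose proof (Cadd_T_T_pos T HT) as HT2.
  destruct (gauss_pair_dom T a u v HT) as [K HK].
  rewrite gauss_prod_double_sum, (Zsum_fubini _ _ HK) by auto.
  assert (Hgap : Zdom (fun d => Zsum (fun m => gauss_pair T a u v m d)) (4 * K / (1 - qr))).
  { intros d. eapply Rle_trans.
    - apply (Zsum_bound _ (K * zweight d)). intros m. eapply Rle_trans; [apply HK|].
      apply Req_le; ring.
    - apply Req_le; unfold Rdiv; ring. }
  rewrite (Zsum_even_odd _ _ Hgap).
  rewrite (Zsum_ext _ _ (fun l => gauss_pair_sum_even T a u v l HT)),
          (Zsum_ext _ _ (fun l => gauss_pair_sum_odd T a u v l HT)).
  destruct (gauss_term_dom (Cadd T T) 0 (Csub v u) HT2) as [K0 HK0].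
  destruct (gauss_term_dom (Cadd T T) (/2) (Csub v u) HT2) as [K1 HK1].
  rewrite (Zsum_scal _ _ _ HK0), (Zsum_scal _ _ _ HK1). reflexivity.
Qed.

(** * Theta functions as Gaussian sums

    With [hpi = pi/2]:  [theta4 tau x = G(2 tau, 0, x + pi/2)] and
    [theta1 tau x = - G(2 tau, 1/2, x + pi/2)]; the terms [k] and [-k-2a]
    of the Gaussian sum combine into one term of the theta series. *)

Definition hpi : Cplx := (PI / 2, 0).

Lemma sin_npi n : sin (INR n * PI) = 0.
Proof. apply sin_eq_0_1. exists (Z.of_nat n). rewrite <- INR_IZR_INZ. reflexivity. Qed.

Lemma cos_npi n : cos (INR n * PI) = (-1) ^ n.
Proof.
  induction n as [|n IH]; [simpl; rewrite Rmult_0_l, cos_0; reflexivity|].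
  rewrite S_INR, Rmult_plus_distr_r, Rmult_1_l, neg_cos, IH. simpl. ring.
Qed.

Lemma cos_nhpi n : cos ((INR n + /2) * PI) = 0.
Proof.
  replace ((INR n + /2) * PI) with (PI / 2 + INR n * PI) by field.
  rewrite cos_plus, cos_PI2, sin_npi. ring.
Qed.

Lemma sin_nhpi n : sin ((INR n + /2) * PI) = (-1) ^ n.
Proof.
  replace ((INR n + /2) * PI) with (PI / 2 + INR n * PI) by field.
  rewrite sin_plus, sin_PI2, cos_npi, sin_npi. ring.
Qed.

Lemma IZR_zpos n : IZR (zpos n) = INR n.
Proof. unfold zpos. symmetry. apply INR_IZR_INZ. Qed.

Lemma IZR_zneg n : IZR (zneg n) = - (INR n + 1).
Proof. unfold zneg. rewrite opp_IZR, <- INR_IZR_INZ, S_INR. reflexivity. Qed.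

Lemma Cseries_of_pairs g K (p : nat -> Z) (c : Cplx) (t : nat -> Cplx) :
  Zdom g K -> Cdom (fun n => g (p n)) K ->
  (forall n, t n = Cmul c (Cadd (g (p n)) (g (zneg n)))) ->
  Cseries t = Cmul c (Cadd (Cser (fun n => g (p n))) (Cser (fun n => g (zneg n)))).
Proof.
  intros Hg Hp Ht.
  assert (Hs : Cdom (fun n => Cadd (g (p n)) (g (zneg n))) (K + K))
    by (apply Cdom_add; [|apply Zdom_neg_part]; auto).
  assert (Hdom : Cdom t (Cnorm c * (K + K))).
  { eapply Cdom_ext; [intros n; symmetry; apply Ht | apply Cdom_scal, Hs]. }
  rewrite (Cseries_Cser _ _ Hdom), (Cser_ext _ _ Ht), (Cser_scal _ _ _ Hs).
  rewrite (Cser_add _ _ K K); [reflexivity | auto | apply Zdom_neg_part; auto].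
Qed.

Lemma theta1_term tau x n :
  Cadd (gauss_term (Cadd tau tau) (/2) (Cadd x hpi) (zpos n))
       (gauss_term (Cadd tau tau) (/2) (Cadd x hpi) (zneg n)) =
  Cmul (-2, 0) (Cmul (sgn n)
      (Cmul (Cexp (Cmul (Cmul (Defs.RtoC (2 * PI * (INR n + /2) ^ 2)) Ci) tau))
            (Csin (Cmul (Defs.RtoC (2 * INR n + 1)) x)))).
Proof.
  set (E := Cmul (Cmul (Defs.RtoC (2 * PI * (INR n + /2) ^ 2)) Ci) tau).
  set (z := Cmul (Defs.RtoC (2 * INR n + 1)) x).
  assert (P : gauss_term (Cadd tau tau) (/2) (Cadd x hpi) (zpos n) =
     Cmul (Cmul (Cexp E) (Cexp (Cmul Ci z))) (Cexp (0, (INR n + /2) * PI))).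
  { rewrite <- !Cexp_add. unfold gauss_term. f_equal. rewrite IZR_zpos. unfold E, z, hpi.
    unfold Cadd, Cmul, Ci, Defs.RtoC; cbn [fst snd]. apply Cplx_eq; field. }
  assert (N : gauss_term (Cadd tau tau) (/2) (Cadd x hpi) (zneg n) =
     Cmul (Cmul (Cexp E) (Cexp (Copp (Cmul Ci z)))) (Cexp (0, - ((INR n + /2) * PI)))).
  { rewrite <- !Cexp_add. unfold gauss_term. f_equal. rewrite IZR_zneg. unfold E, z, hpi.
    unfold Cadd, Copp, Cmul, Ci, Defs.RtoC; cbn [fst snd]. apply Cplx_eq; field. }
  rewrite P, N. unfold Csin. clearbody E z.
  rewrite !Cexp_im, cos_neg, sin_neg, cos_nhpi, sin_nhpi.
  destruct (Cexp E) as [a1 a2], (Cexp (Cmul Ci z)) as [b1 b2], (Cexp (Copp (Cmul Ci z))) as [c1 c2].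
  unfold sgn, Csub, Copp, Cadd, Cmul, Defs.RtoC; cbn [fst snd]. apply Cplx_eq; field.
Qed.

Lemma theta1_gauss tau x : 0 < snd tau ->
  theta1 tau x = Copp (gauss_sum (Cadd tau tau) (/2) (Cadd x hpi)).
Proof.
  intros HT. set (g := gauss_term (Cadd tau tau) (/2) (Cadd x hpi)).
  destruct (gauss_term_dom (Cadd tau tau) (/2) (Cadd x hpi) (Cadd_T_T_pos _ HT)) as [K HK].
  unfold theta1. rewrite (Cseries_of_pairs g K zpos (-/2, 0)).
  - unfold gauss_sum, Zsum. fold g.
    destruct (Cser (fun n => g (zpos n))), (Cser (fun n => g (zneg n))).
    unfold Copp, Cadd, Cmul, Defs.RtoC; cbn [fst snd]. apply Cplx_eq; field.
  - exact HK.
  - apply Zdom_pos_part, HK.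
  - intros n. unfold g. rewrite theta1_term.
    match goal with |- ?t = _ => destruct t end.
    unfold Cmul; cbn [fst snd]. apply Cplx_eq; field.
Qed.

Lemma theta4_term tau x n :
  Cadd (gauss_term (Cadd tau tau) 0 (Cadd x hpi) (zpos (S n)))
       (gauss_term (Cadd tau tau) 0 (Cadd x hpi) (zneg n)) =
  Cmul (2, 0) (Cmul (sgn (S n))
      (Cmul (Cexp (Cmul (Cmul (Defs.RtoC (2 * PI * (INR (S n)) ^ 2)) Ci) tau))
            (Ccos (Cmul (Defs.RtoC (2 * INR (S n))) x)))).
Proof.
  set (E := Cmul (Cmul (Defs.RtoC (2 * PI * (INR (S n)) ^ 2)) Ci) tau).
  set (z := Cmul (Defs.RtoC (2 * INR (S n))) x).
  assert (P : gauss_term (Cadd tau tau) 0 (Cadd x hpi) (zpos (S n)) =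
     Cmul (Cmul (Cexp E) (Cexp (Cmul Ci z))) (Cexp (0, INR (S n) * PI))).
  { rewrite <- !Cexp_add. unfold gauss_term. f_equal. rewrite IZR_zpos. unfold E, z, hpi.
    unfold Cadd, Cmul, Ci, Defs.RtoC; cbn [fst snd]. apply Cplx_eq; field. }
  assert (N : gauss_term (Cadd tau tau) 0 (Cadd x hpi) (zneg n) =
     Cmul (Cmul (Cexp E) (Cexp (Copp (Cmul Ci z)))) (Cexp (0, - (INR (S n) * PI)))).
  { rewrite <- !Cexp_add. unfold gauss_term. f_equal. rewrite IZR_zneg. unfold E, z, hpi.
    rewrite S_INR. unfold Cadd, Copp, Cmul, Ci, Defs.RtoC; cbn [fst snd]. apply Cplx_eq; field. }
  rewrite P, N. unfold Ccos. clearbody E z.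
  rewrite !Cexp_im, cos_neg, sin_neg, cos_npi, sin_npi.
  destruct (Cexp E) as [a1 a2], (Cexp (Cmul Ci z)) as [b1 b2], (Cexp (Copp (Cmul Ci z))) as [c1 c2].
  unfold sgn, Csub, Copp, Cadd, Cmul, Defs.RtoC; cbn [fst snd]. apply Cplx_eq; field.
Qed.

Lemma theta4_gauss tau x : 0 < snd tau ->
  theta4 tau x = gauss_sum (Cadd tau tau) 0 (Cadd x hpi).
Proof.
  intros HT. set (g := gauss_term (Cadd tau tau) 0 (Cadd x hpi)).
  destruct (gauss_term_dom (Cadd tau tau) 0 (Cadd x hpi) (Cadd_T_T_pos _ HT)) as [K HK].
  assert (Hp : Cdom (fun n => g (zpos (S n))) K).
  { intros n. eapply Rle_trans; [apply HK|]. rewrite zweight_pos_part.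
    apply Rmult_le_compat_l; [eapply Zdom_K_nonneg; eauto | apply qr_pow_le; lia]. }
  assert (g0 : g (zpos 0) = Defs.C1).
  { unfold g, gauss_term. rewrite IZR_zpos. simpl INR. rewrite <- (Cexp_2kpi 0).
    f_equal. apply Cplx_eq; ring. }
  unfold theta4. rewrite (Cseries_of_pairs g K (fun n => zpos (S n)) (/2, 0)).
  - unfold gauss_sum, Zsum. fold g.
    rewrite (Cser_shift1 (fun n => g (zpos n)) K), g0 by (apply Zdom_pos_part; auto).
    destruct (Cser (fun n => g (zpos (S n)))), (Cser (fun n => g (zneg n))).
    unfold Defs.C1, Cadd, Cmul, Defs.RtoC; cbn [fst snd]. apply Cplx_eq; field.
  - exact HK.
  - exact Hp.
  - intros n. unfold g. rewrite theta4_term. cbv zeta.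
    match goal with |- ?t = _ => destruct t end.
    unfold Cmul; cbn [fst snd]. apply Cplx_eq; field.
Qed.

Lemma Cexp_2pi_half : Cexp (0, 2 * / 2 * PI) = Copp Defs.C1.
Proof.
  rewrite Cexp_im. replace (2 * / 2 * PI) with PI by field. rewrite cos_PI, sin_PI.
  unfold Copp, Defs.C1; simpl. apply Cplx_eq; ring.
Qed.

Lemma Cexp_2pi_zero : Cexp (0, 2 * 0 * PI) = Defs.C1.
Proof. apply (Cexp_2kpi 0). Qed.

Section ThetaIdentities.
Variable tau : Cplx.
Hypothesis Htau : 0 < snd tau.

Lemma theta1_add_pi s : theta1 tau (Cadd s (PI, 0)) = Copp (theta1 tau s).
Proof.
  rewrite !theta1_gauss by auto.
  replace (Cadd (Cadd s (PI, 0)) hpi) with (Cadd (Cadd s hpi) (PI, 0)) by cring.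
  rewrite gauss_sum_pi, Cexp_2pi_half by (apply Cadd_T_T_pos; auto). ring.
Qed.

Lemma theta4_add_pi s : theta4 tau (Cadd s (PI, 0)) = theta4 tau s.
Proof.
  rewrite !theta4_gauss by auto.
  replace (Cadd (Cadd s (PI, 0)) hpi) with (Cadd (Cadd s hpi) (PI, 0)) by cring.
  rewrite gauss_sum_pi, Cexp_2pi_zero by (apply Cadd_T_T_pos; auto). ring.
Qed.

Let T4 := Cadd (Cadd tau tau) (Cadd tau tau).
Let HT4 : 0 < snd T4 := Cadd_T_T_pos _ (Cadd_T_T_pos _ Htau).

Lemma shifted_args s t :
  Cadd (Cadd s hpi) (Cadd t hpi) = Cadd (Cadd s t) (PI, 0) /\
  Csub (Cadd t hpi) (Cadd s hpi) = Csub t s.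
Proof. unfold hpi. split; cfield. Qed.

Lemma theta4_product s t : Cmul (theta4 tau s) (theta4 tau t) =
  Csub (Cmul (gauss_sum T4 0 (Cadd s t)) (gauss_sum T4 0 (Csub t s)))
       (Cmul (gauss_sum T4 (/2) (Cadd s t)) (gauss_sum T4 (/2) (Csub t s))).
Proof.
  destruct (shifted_args s t) as [Es Ed].
  rewrite !theta4_gauss, gauss_sum_product by (auto; apply Cadd_T_T_pos; auto). fold T4.
  replace (0 + /2) with (/2) by ring.
  rewrite Es, Ed, !gauss_sum_pi, Cexp_2pi_zero, Cexp_2pi_half by auto. ring.
Qed.

Lemma theta1_product s t : Cmul (theta1 tau s) (theta1 tau t) =
  Csub (Cmul (gauss_sum T4 0 (Cadd s t)) (gauss_sum T4 (/2) (Csub t s)))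
       (Cmul (gauss_sum T4 (/2) (Cadd s t)) (gauss_sum T4 0 (Csub t s))).
Proof.
  destruct (shifted_args s t) as [Es Ed].
  rewrite !theta1_gauss by auto.
  replace (Cmul (Copp (gauss_sum (Cadd tau tau) (/2) (Cadd s hpi)))
                (Copp (gauss_sum (Cadd tau tau) (/2) (Cadd t hpi))))
    with (Cmul (gauss_sum (Cadd tau tau) (/2) (Cadd s hpi))
               (gauss_sum (Cadd tau tau) (/2) (Cadd t hpi))) by ring.
  rewrite gauss_sum_product by (apply Cadd_T_T_pos; auto). fold T4.
  replace (/2 + /2) with (0 + 1) by field.
  rewrite gauss_sum_shift1, Es, Ed, !gauss_sum_pi, Cexp_2pi_zero, Cexp_2pi_half by auto. ring.
Qed.

Lemma sum_diff_args w v :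
  Cadd (Csub w v) (Cadd w v) = Cadd w w /\ Csub (Cadd w v) (Csub w v) = Cadd v v.
Proof. split; cring. Qed.

(** Addition formulas: both sides expand into the same four products of
    Gaussian sums of nome [4 tau]. *)
Lemma theta1_addition w v :
  Cmul (Cmul (theta1 tau (Csub w v)) (theta1 tau (Cadd w v))) (Cmul (theta4 tau C0) (theta4 tau C0)) =
  Csub (Cmul (Cmul (theta1 tau w) (theta1 tau w)) (Cmul (theta4 tau v) (theta4 tau v)))
       (Cmul (Cmul (theta4 tau w) (theta4 tau w)) (Cmul (theta1 tau v) (theta1 tau v))).
Proof.
  destruct (sum_diff_args w v) as [Es Ed].
  rewrite !theta1_product, !theta4_product, Es, Ed, !Csub_diag, !Cadd_0_r. ring.
Qed.

Lemma theta4_addition w v :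
  Cmul (Cmul (theta4 tau (Csub w v)) (theta4 tau (Cadd w v))) (Cmul (theta4 tau C0) (theta4 tau C0)) =
  Csub (Cmul (Cmul (theta4 tau w) (theta4 tau w)) (Cmul (theta4 tau v) (theta4 tau v)))
       (Cmul (Cmul (theta1 tau w) (theta1 tau w)) (Cmul (theta1 tau v) (theta1 tau v))).
Proof.
  destruct (sum_diff_args w v) as [Es Ed].
  rewrite !theta1_product, !theta4_product, Es, Ed, !Csub_diag, !Cadd_0_r. ring.
Qed.

End ThetaIdentities.

(** * The weights at [eta = pi/3]

    Since [3 eta = pi], the addition formulas with [v = 2 eta] turn into two
    quadratic relations between the weights at [y] and [y + 2 eta]. *)

Lemma shifts_by_eta y :
  Csub (Cadd y (eta2 eta_pi3)) (eta2 eta_pi3) = y /\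
  Cadd (Cadd y (eta2 eta_pi3)) (eta2 eta_pi3) = Cadd (Cadd y eta_pi3) (PI, 0) /\
  Cadd (Cadd y (eta2 eta_pi3)) eta_pi3 = Cadd y (PI, 0).
Proof. destruct y. repeat split; cfield. Qed.

Section WeightsAtPiOver3.
Variable tau : Cplx.
Hypothesis Htau : 0 < snd tau.
Variable y : Cplx.

Let e2 := eta2 eta_pi3.
Let y' := Cadd y e2.
Let rho := Cmul (wr tau eta_pi3 y) (wr tau eta_pi3 y').


Lemma weights_relation_c :
  Csub (Cmul (wa tau eta_pi3 y) (wb tau eta_pi3 y')) (Cmul (wc tau eta_pi3 y) (wc tau eta_pi3 y')) = rho.
Proof.
  destruct (shifts_by_eta y) as [Em [E2 E1]]. fold e2 in Em, E2, E1. fold y' in Em, E2, E1.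
  pose proof (theta1_addition tau Htau y' e2) as A.
  unfold rho, wa, wb, wc, wr. fold e2 y'.
  rewrite Em, E2, theta1_add_pi in A by auto.
  rewrite E2, E1, theta1_add_pi, theta4_add_pi, theta4_add_pi by auto.
  match type of A with _ = ?r =>
    transitivity (Cmul (Cmul (theta4 tau y) (theta4 tau (Cadd y eta_pi3))) r) end;
  [ring | rewrite <- A; ring].
Qed.

Lemma weights_relation_d :
  Csub (Cmul (wa tau eta_pi3 y') (wb tau eta_pi3 y)) (Cmul (wd tau eta_pi3 y) (wd tau eta_pi3 y')) = rho.
Proof.
  destruct (shifts_by_eta y) as [Em [E2 E1]]. fold e2 in Em, E2, E1. fold y' in Em, E2, E1.
  pose proof (theta4_addition tau Htau y' e2) as A.
  unfold rho, wa, wb, wd, wr. fold e2 y'.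
  rewrite Em, E2, theta4_add_pi in A by auto.
  rewrite E2, E1, theta1_add_pi, theta1_add_pi, theta4_add_pi by auto.
  match type of A with _ = ?r =>
    transitivity (Cmul (Cmul (theta1 tau y) (Copp (theta1 tau (Cadd y eta_pi3)))) r) end;
  [ring | rewrite <- A; ring].
Qed.

End WeightsAtPiOver3.

(** The monodromy of two sites with parameters [x, x + 2 eta] maps the
    singlet to [r(x-u) r(x+2eta-u)] times the singlet, and acts trivially
    on the auxiliary space: the diagonal entries are the weight relations,
    the others vanish identically. *)
Lemma pair_monodromy_singlet tau (Htau : 0 < snd tau) u x c b s1 s2 :
  Csub (mono tau eta_pi3 u [x; Cadd x (eta2 eta_pi3)] c b [s1; s2] [false; true])
       (mono tau eta_pi3 u [x; Cadd x (eta2 eta_pi3)] c b [s1; s2] [true; false]) =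
  if Bool.eqb c b
  then Cmul (Cmul (wr tau eta_pi3 (Csub x u)) (wr tau eta_pi3 (Csub (Cadd x (eta2 eta_pi3)) u)))
            (singlet s1 s2)
  else C0.
Proof.
  assert (Ey : Csub (Cadd x (eta2 eta_pi3)) u = Cadd (Csub x u) (eta2 eta_pi3)) by cring.
  pose proof (weights_relation_c tau Htau (Csub x u)) as Jc.
  pose proof (weights_relation_d tau Htau (Csub x u)) as Jd.
  cbv zeta in Jc, Jd.
  destruct c, b, s1, s2; cbn [mono Bool.eqb singlet]; unfold Rent; cbn [Bool.eqb andb negb];
  rewrite !Ey;
  first [ ring | rewrite <- Jc; ring | rewrite <- Jd; ring | unfold wa, wb, wc, wd; ring ].
Qed.

Lemma Csum_nil : Csum [] = C0.
Proof. reflexivity. Qed.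

Lemma Csum_cons z l : Csum (z :: l) = Cadd z (Csum l).
Proof. reflexivity. Qed.

Lemma Csum_add {A} (f g : A -> Cplx) l :
  Csum (map (fun t => Cadd (f t) (g t)) l) = Cadd (Csum (map f l)) (Csum (map g l)).
Proof. induction l as [|a l IH]; cbn [map]; rewrite ?Csum_nil, ?Csum_cons, ?IH; ring. Qed.

Lemma Csum_scal {A} c (f : A -> Cplx) l :
  Csum (map (fun t => Cmul c (f t)) l) = Cmul c (Csum (map f l)).
Proof. induction l as [|a l IH]; cbn [map]; rewrite ?Csum_nil, ?Csum_cons, ?IH; ring. Qed.

Lemma Csum_ext_in {A} (f g : A -> Cplx) l :
  (forall t, In t l -> f t = g t) -> Csum (map f l) = Csum (map g l).
Proof.
  intros H. f_equal. apply map_ext_in. exact H.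
Qed.

Lemma Csum_swap {A B} (f : A -> B -> Cplx) l1 l2 :
  Csum (map (fun a => Csum (map (fun b => f a b) l2)) l1) =
  Csum (map (fun b => Csum (map (fun a => f a b) l1)) l2).
Proof.
  induction l1 as [|a l1 IH]; cbn [map].
  - induction l2 as [|b l2 IH2]; cbn [map]; [reflexivity|].
    rewrite Csum_cons, <- IH2, Csum_nil. ring.
  - rewrite Csum_cons, IH, <- Csum_add. reflexivity.
Qed.

Lemma configs_S (f : list bool -> Cplx) n :
  Csum (map f (configs (S n))) =
  Csum (map (fun c => Cadd (f (false :: c)) (f (true :: c))) (configs n)).
Proof.
  simpl. induction (configs n) as [|c l IH]; [reflexivity|].
  cbn [flat_map app map]. rewrite !Csum_cons, IH. ring.
Qed.

Lemma configs_length n c : In c (configs n) -> length c = n.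
Proof.
  revert c. induction n as [|n IH]; simpl; intros c H.
  - destruct H as [H|[]]; subst; reflexivity.
  - apply in_flat_map in H. destruct H as [c' [H1 [H2|[H2|[]]]]]; subst; simpl; f_equal; auto.
Qed.

Lemma configs_split (f : list bool -> Cplx) n m :
  Csum (map f (configs (n + m))) =
  Csum (map (fun c1 => Csum (map (fun c2 => f (c1 ++ c2)) (configs m))) (configs n)).
Proof.
  revert f. induction n as [|n IH]; intros f.
  - cbn [configs map app]. rewrite Csum_cons, Csum_nil, Cadd_0_r. reflexivity.
  - change (S n + m)%nat with (S (n + m)). rewrite configs_S, IH, configs_S.
    f_equal. apply map_ext. intros c1. rewrite <- Csum_add. reflexivity.
Qed.

Lemma mono_app tau eta u xs1 xs2 a' a sg1 sg2 ta1 ta2 :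
  length xs1 = length sg1 -> length sg1 = length ta1 ->
  mono tau eta u (xs1 ++ xs2) a' a (sg1 ++ sg2) (ta1 ++ ta2) =
  Cadd (Cmul (mono tau eta u xs2 a' false sg2 ta2) (mono tau eta u xs1 false a sg1 ta1))
       (Cmul (mono tau eta u xs2 a' true sg2 ta2) (mono tau eta u xs1 true a sg1 ta1)).
Proof.
  revert a sg1 ta1. induction xs1 as [|y ys IH]; intros a sg1 ta1 H1 H2.
  - destruct sg1; [|discriminate]. destruct ta1; [|discriminate]. simpl.
    destruct a; simpl; ring.
  - destruct sg1 as [|s sg1]; [discriminate|]. destruct ta1 as [|t ta1]; [discriminate|].
    simpl in H1, H2. injection H1 as H1. injection H2 as H2.
    simpl. rewrite !IH by auto. ring.
Qed.

Lemma mono_remove_singlet_pair tau (Htau : 0 < snd tau) u x xp xq a' a p q s1 s2 ta1 ta2 :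
  length xp = length p -> length p = length ta1 ->
  Csub (mono tau eta_pi3 u (xp ++ [x; Cadd x (eta2 eta_pi3)] ++ xq) a' a
             (p ++ [s1; s2] ++ q) (ta1 ++ [false; true] ++ ta2))
       (mono tau eta_pi3 u (xp ++ [x; Cadd x (eta2 eta_pi3)] ++ xq) a' a
             (p ++ [s1; s2] ++ q) (ta1 ++ [true; false] ++ ta2)) =
  Cmul (Cmul (Cmul (wr tau eta_pi3 (Csub x u)) (wr tau eta_pi3 (Csub (Cadd x (eta2 eta_pi3)) u)))
             (singlet s1 s2))
       (mono tau eta_pi3 u (xp ++ xq) a' a (p ++ q) (ta1 ++ ta2)).
Proof.
  intros H1 H2. rewrite !mono_app by (simpl; auto).
  assert (Hft : forall c b,
    mono tau eta_pi3 u [x; Cadd x (eta2 eta_pi3)] c b [s1; s2] [false; true] =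
    Cadd (if Bool.eqb c b
          then Cmul (Cmul (wr tau eta_pi3 (Csub x u))
                          (wr tau eta_pi3 (Csub (Cadd x (eta2 eta_pi3)) u))) (singlet s1 s2)
          else C0)
         (mono tau eta_pi3 u [x; Cadd x (eta2 eta_pi3)] c b [s1; s2] [true; false])).
  { intros c b. rewrite <- (pair_monodromy_singlet tau Htau). ring. }
  rewrite !Hft. cbn [Bool.eqb]. ring.
Qed.

Lemma ins_singlet_split i v p q s1 s2 : (1 <= i)%nat -> length p = (i - 1)%nat ->
  ins_singlet i v (p ++ [s1; s2] ++ q) = Cmul (v (p ++ q)) (singlet s1 s2).
Proof.
  intros Hi Hp. unfold ins_singlet.
  rewrite firstn_app, Hp, Nat.sub_diag, firstn_O, app_nil_r, <- Hp, firstn_all.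
  rewrite skipn_app. replace (i + 1 - length p)%nat with 2%nat by lia.
  rewrite skipn_all2 by lia. simpl. f_equal. f_equal.
  - rewrite app_nth2, Nat.sub_diag by lia. reflexivity.
  - rewrite app_nth2 by lia. replace (i - length p)%nat with 1%nat by lia. reflexivity.
Qed.

Lemma transfer_pair_sum tau (Htau : 0 < snd tau) u x xp xq p q s1 s2 i v ta1 ta2 :
  (1 <= i)%nat -> length xp = (i - 1)%nat -> length p = (i - 1)%nat -> length ta1 = (i - 1)%nat ->
  Csum (map (fun c =>
      Cmul (Tent tau eta_pi3 u (xp ++ [x; Cadd x (eta2 eta_pi3)] ++ xq) (p ++ [s1; s2] ++ q)
                 (ta1 ++ c ++ ta2))
           (ins_singlet i v (ta1 ++ c ++ ta2))) (configs 2)) =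
  Cmul (Cmul (Cmul (wr tau eta_pi3 (Csub x u)) (wr tau eta_pi3 (Csub (Cadd x (eta2 eta_pi3)) u)))
             (singlet s1 s2))
       (Cmul (Tent tau eta_pi3 u (xp ++ xq) (p ++ q) (ta1 ++ ta2)) (v (ta1 ++ ta2))).
Proof.
  intros Hi Hxp Hp Hta1.
  assert (Hpair : forall a,
    mono tau eta_pi3 u (xp ++ [x; Cadd x (eta2 eta_pi3)] ++ xq) a a
         (p ++ [s1; s2] ++ q) (ta1 ++ [false; true] ++ ta2) =
    Cadd (Cmul (Cmul (Cmul (wr tau eta_pi3 (Csub x u))
                           (wr tau eta_pi3 (Csub (Cadd x (eta2 eta_pi3)) u))) (singlet s1 s2))
               (mono tau eta_pi3 u (xp ++ xq) a a (p ++ q) (ta1 ++ ta2)))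
         (mono tau eta_pi3 u (xp ++ [x; Cadd x (eta2 eta_pi3)] ++ xq) a a
               (p ++ [s1; s2] ++ q) (ta1 ++ [true; false] ++ ta2))).
  { intros a. rewrite <- mono_remove_singlet_pair by (auto; lia). ring. }
  change (configs 2) with [[false; false]; [true; false]; [false; true]; [true; true]].
  cbn [map]. rewrite !Csum_cons, Csum_nil.
  rewrite !ins_singlet_split by lia. cbn [singlet].
  unfold Tent. rewrite !Hpair. ring.
Qed.

Lemma config_split_at (sg : list bool) i L : length sg = L -> (1 <= i)%nat -> (i <= L - 1)%nat ->
  exists p s1 s2 q, sg = p ++ [s1; s2] ++ q /\ length p = (i - 1)%nat.
Proof.
  intros HL H1 H2.
  exists (firstn (i - 1) sg), (nth (i - 1) sg false), (nth i sg false), (skipn (i + 1) sg).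
  split; [|rewrite length_firstn; lia].
  rewrite <- (firstn_skipn (i - 1) sg) at 1. f_equal.
  assert (Hnth : forall k l, (k < length l)%nat -> skipn k l = nth k l false :: skipn (S k) l).
  { induction k as [|k IH]; intros [|b l] Hk; simpl in *; try lia; auto. apply IH. lia. }
  rewrite Hnth by lia. replace (S (i - 1)) with i by lia.
  rewrite Hnth by lia. replace (S i) with (i + 1)%nat by lia. reflexivity.
Qed.

Lemma insert_pair_split i x y xp xq : length xp = (i - 1)%nat ->
  insert_pair i x y (xp ++ xq) = xp ++ [x; y] ++ xq.
Proof.
  intros H. unfold insert_pair. rewrite firstn_app, H, Nat.sub_diag, firstn_O, app_nil_r.
  rewrite <- H, firstn_all, skipn_app, skipn_all, Nat.sub_diag, skipn_O. reflexivity.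
Qed.

Theorem mainTheorem8 (tau : Cplx) (Htau : 0 < Cim tau)
  (L i : nat) (HL : (3 <= L)%nat) (Hi1 : (1 <= i)%nat) (Hi2 : (i <= L - 1)%nat)
  (u x : Cplx) (xs : list Cplx) (Hxs : length xs = (L - 2)%nat)
  (v : list bool -> Cplx) (sg : list bool) (Hsg : length sg = L) :
  Tapply tau eta_pi3 L u (insert_pair i x (Cadd x (eta2 eta_pi3)) xs) (ins_singlet i v) sg =
  Cmul (Cmul (wr tau eta_pi3 (Csub x u)) (wr tau eta_pi3 (Csub (Cadd x (eta2 eta_pi3)) u)))
       (ins_singlet i (Tapply tau eta_pi3 (L - 2) u xs v) sg).
Proof.
  destruct (config_split_at sg i L Hsg Hi1 Hi2) as [p [s1 [s2 [q [-> Hp]]]]].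
  rewrite <- (firstn_skipn (i - 1) xs).
  assert (Hxp : length (firstn (i - 1) xs) = (i - 1)%nat) by (rewrite length_firstn; lia).
  revert Hxp. generalize (firstn (i - 1) xs) (skipn (i - 1) xs). intros xp xq Hxp.
  rewrite insert_pair_split, ins_singlet_split by auto.
  set (rho := Cmul (wr tau eta_pi3 (Csub x u)) (wr tau eta_pi3 (Csub (Cadd x (eta2 eta_pi3)) u))).
  transitivity (Cmul (Cmul rho (singlet s1 s2))
                     (Tapply tau eta_pi3 (L - 2) u (xp ++ xq) v (p ++ q))); [|ring].
  set (m := (L - i - 1)%nat). unfold Tapply.
  replace L with (i - 1 + (2 + m))%nat at 1 by (unfold m; lia).
  replace (L - 2)%nat with (i - 1 + m)%nat by (unfold m; lia).
  rewrite !configs_split, <- Csum_scal. apply Csum_ext_in. intros ta1 Hta1.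
  rewrite <- Csum_scal, configs_split, Csum_swap. apply Csum_ext_in. intros ta2 _.
  rewrite transfer_pair_sum by (auto; apply configs_length; auto). reflexivity.
Qed.
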